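(* Let $n\ge3$. Let $\mathcal M=(G,\{1\},\{1\},\emptyset)$ be a strongly connected linear compartmental model with $n-1$ compartments, input and output in compartment $1$, and no leaks. Let $H$ be obtained from $G$ by adding a leaf edge at compartment $1$ (new compartment $n$, edges $1\to n$ with parameter $a_{n1}$ and $n\to1$ with parameter $a_{1n}$), and let $\mathcal M'=(H,\{1\},\{n\},\emptyset)$. Let $A$ and $A'$ be the compartmental matrices of $\mathcal M$ and $\mathcal M'$. Define $c_0,\dots,c_{n-1}$ and $d_0,\dots,d_{n-2}$ by $\det(\lambda I-A)=\sum_{i=0}^{n-1}c_i\lambda^i$ and $\det((\lambda I-A)^{1,1})=\sum_{i=0}^{n-2}d_i\lambda^i$ (so $c_{n-1}=d_{n-2}=1$), and define $c^*_0,\dots,c^*_{n-1}$ and $d^*_0,\dots,d^*_{n-2}$ by $\det(\lambda I-A')=\lambda^n+\sum_{i=0}^{n-1}c^*_i\lambda^i$ and $\det((\lambda I-A')^{1,n})=\sum_{i=0}^{n-2}d^*_i\lambda^i$. Then: (1) (i) $d^*_i=(-1)^{n-1}a_{n1}d_i$ for $i=0,\dots,n-2$; (ii) $c^*_i=c_{i-1}+a_{1n}c_i+a_{n1}d_{i-1}$ for $i=1,\dots,n-1$; (iii) $c^*_0=c_0=0$. (2) If $c_{\mathcal M}$ and $c_{\mathcal M'}$ denote the coefficient maps of $\mathcal M$ and $\mathcal M'$, then the rank of the Jacobian matrix of $c_{\mathcal M'}$ at a generic point equals $2$ plus the rank of the Jacobian matrix of $c_{\mathcal M}$ at a generic point.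
   Context: A linear compartmental model $\mathcal M=(G,In,Out,Leak)$ consists of a finite directed graph $G=(V_G,E_G)$ without multi-edges, compartments $V_G=\{1,\dots,n\}$, and subsets $In,Out,Leak\subseteq V_G$; edge $j\to i$ carries parameter $a_{ij}$ and each $i\in Leak$ carries $a_{0i}$. The compartmental matrix $A$ has $A_{ii}=-\sum_{k:\,i\to k\in E_G}a_{ki}$ (minus $a_{0i}$ if $i\in Leak$), $A_{ij}=a_{ij}$ if $j\to i\in E_G$, $0$ otherwise. $B^{i,j}$ denotes $B$ with row $i$ and column $j$ removed. The input-output equations are $\det(\partial I-A)y_i=\sum_{j\in In}(-1)^{i+j}\det((\partial I-A)^{j,i})u_j$ ($i\in Out$), $\partial I$ the diagonal matrix of $d/dt$'s; the coefficient map sends the parameter vector in $\mathbb R^{|E_G|+|Leak|}$ to the vector of all non-constant coefficients (polynomials in the parameters) of these equations. Adding a leaf edge at $i$ to a graph with vertex set $\{1,\dots,n-1\}$ gives the graph with vertex set $\{1,\dots,n\}$ and edge set $E_G\cup\{i\to n,n\to i\}$. *)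

From HB Require Import structures.
From mathcomp Require Import all_boot all_order all_algebra.
From mathcomp Require Import mpoly.
Set Implicit Arguments. Unset Strict Implicit. Unset Printing Implicit Defensive.
Import Order.TTheory GRing.Theory Num.Theory.
Local Open Scope ring_scope.

(* Compartments 1..k are represented by 'I_k (compartment i+1 <-> ordinal i).
   A graph is an edge relation E : rel 'I_k with  E j i  meaning  j -> i.   *)

Definition strongly_connected k (E : rel 'I_k) : Prop :=
  forall i j : 'I_k, connect E i j.

Definition loopless k (E : rel 'I_k) : Prop := forall i : 'I_k, ~~ E i i.

(* Compartmental matrix with parameter values a i j (= a_{ij}, used on
   edges j -> i) and leak values a0 i (= a_{0i}, used for i in L). *)
Definition compmx (S : comNzRingType) k (E : rel 'I_k) (L : {set 'I_k})
    (a : 'I_k -> 'I_k -> S) (a0 : 'I_k -> S) : 'M[S]_k :=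
  \matrix_(i, j)
    if i == j then - (\sum_(l | E i l) a l i) - (if i \in L then a0 i else 0)
    else if E j i then a i j else 0.

(* Adding a leaf edge at compartment 1 (= ord0) to a graph on k.+1 vertices:
   new compartment n = ord_max of 'I_k.+2, edges 1 -> n and n -> 1. *)
Definition add_leaf1 k (E : rel 'I_k.+1) : rel 'I_k.+2 :=
  fun x y =>
    match unlift ord_max x, unlift ord_max y with
    | Some x', Some y' => E x' y'
    | Some x', None => x' == ord0
    | None, Some y' => y' == ord0
    | None, None => false
    end.

(* Parameters of a model: edges j -> i (stored as pairs (i,j), parameter a_{ij})
   and leaks. *)
Definition param_t k (E : rel 'I_k) (L : {set 'I_k}) : finType :=
  ({p : 'I_k * 'I_k | E p.2 p.1} + {i : 'I_k | i \in L})%type.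

Definition nparams k (E : rel 'I_k) (L : {set 'I_k}) := #|{: param_t E L}|.

Section Generic.
Variables (R : realFieldType) (k : nat) (E : rel 'I_k) (L : {set 'I_k}).
Local Notation m := (nparams E L).
Local Notation P := {mpoly R[m]}.

(* symbolic parameters: the coordinate functions on R^(|E|+|Leak|) *)
Definition gen_a (i j : 'I_k) : P :=
  oapp (fun p : {p : 'I_k * 'I_k | E p.2 p.1} =>
          'X_(enum_rank (inl p : param_t E L))) 0 (insub (i, j)).
Definition gen_a0 (i : 'I_k) : P :=
  oapp (fun q : {i : 'I_k | i \in L} =>
          'X_(enum_rank (inr q : param_t E L))) 0 (insub i).

Definition gen_compmx : 'M[P]_k := compmx E L gen_a gen_a0.

(* All coefficients of the input-output equations
     det(dI - A) y_i = sum_{j in In} (-1)^(i+j) det((dI - A)^{j,i}) u_j,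
   i in Out, followed by keeping only the non-constant ones. *)
Definition io_coeffs (In Out : {set 'I_k}) : seq P :=
  flatten [seq polyseq (char_poly gen_compmx) ++
               flatten [seq polyseq ((-1) ^+ (val i + val j)%N *
                            \det (row' j (col' i (char_poly_mx gen_compmx))))
                       | j : 'I_k <- enum In]
          | i : 'I_k <- enum Out].

Definition nonconst (p : P) : bool := p != (p@_mnm0)%:MP.

Definition io_coef_map (In Out : {set 'I_k}) : seq P :=
  [seq p <- io_coeffs In Out | nonconst p].

End Generic.

Definition jacobian (R : realFieldType) m (cs : seq {mpoly R[m]}) (x : 'I_m -> R)
  : 'M[R]_(size cs, m) :=
  \matrix_(i, j) (mderiv j cs`_i).@[x].

(* r is the rank of the Jacobian at a generic point, i.e. the maximal rank,
   attained on a nonempty Zariski-open (dense) set of parameters. *)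
Definition generic_jacobian_rank (R : realFieldType) m (cs : seq {mpoly R[m]})
    (r : nat) : Prop :=
  (exists x, \rank (jacobian cs x) = r) /\ (forall x, (\rank (jacobian cs x) <= r)%N).

(* Expanding det(XI - A') along the row and column of the new compartment n, whose
   only off-diagonal entries sit in compartment 1, gives
     c* = (X + a1n)(c + an1 d) - a1n an1 d = X c + a1n c + an1 X d,
     d* = (-1)^(n-1) an1 d,
   and c_0 = det(-A) = 0 because the columns of a leak-free compartmental matrix
   sum to zero.

   For the ranks, rename the parameters of M into those of M'. By the identities
   above, every gradient of a coefficient of M' lies in the span of the renamed
   Jacobian of M and of the unit vectors of a1n and an1, so its rank is at most
   r + 2. Conversely, at a point where the parameters of M are generic, an1 = 1 and
   c(-a1n) <> 0, the row space of the Jacobian of M' contains the unit vector of an1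
   (from the leading coefficient of d), hence all gradients of d, then the unit
   vector of a1n (evaluate (X + a1n) c at X = -a1n), and finally all gradients of c
   by descending induction on the coefficients of (X + a1n) c; so the rank is r + 2. *)

From HB Require Import structures.
From mathcomp Require Import all_boot all_order all_algebra.
From mathcomp Require Import mpoly.
From mathcomp Require Import ring zify.
Set Implicit Arguments. Unset Strict Implicit. Unset Printing Implicit Defensive.
Import Order.TTheory GRing.Theory Num.Theory.
Local Open Scope ring_scope.

Lemma char_poly_mxE (T : nzRingType) n (B : 'M[T]_n) i j :
  char_poly_mx B i j = 'X *+ (i == j) - (B i j)%:P.
Proof. by rewrite !mxE. Qed.

Lemma row'_col'_add_delta00 (T : nzRingType) n (B : 'M[T]_n.+1) x :
  row' ord0 (col' ord0 (B + x *: delta_mx 0 0)) = row' ord0 (col' ord0 B).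
Proof. by apply/matrixP => i j; rewrite !mxE eq_sym (negbTE (neq_lift _ _)) mulr0 addr0. Qed.

Lemma det_add_delta00 (T : comNzRingType) n (M : 'M[T]_n.+1) x :
  \det (M + x *: delta_mx 0 0) = \det M + x * \det (row' ord0 (col' ord0 M)).
Proof.
have cofE j : cofactor (M + x *: delta_mx 0 0) ord0 j = cofactor M ord0 j.
  rewrite /cofactor; congr (_ * \det _); apply/matrixP => r s.
  by rewrite !mxE eq_sym (negbTE (neq_lift _ _)) mulr0 addr0.
rewrite (expand_det_row _ ord0).
under eq_bigr do rewrite cofE !mxE mulrDl.
rewrite big_split /= -(expand_det_row M) (bigD1 ord0) //= big1 ?addr0.
  by rewrite /cofactor mulr1 expr0 mul1r.
by move=> j /negbTE j0; rewrite j0 mulr0 mul0r.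
Qed.

Lemma lift_max_ord0 k : lift ord_max ord0 = ord0 :> 'I_k.+2.
Proof. exact: val_inj. Qed.

Lemma lift_ord0_max k : lift ord0 ord_max = ord_max :> 'I_k.+2.
Proof. exact: val_inj. Qed.

Lemma lift0_lift_max k (j : 'I_k) :
  lift ord0 (lift ord_max j) = lift ord_max (lift ord0 j) :> 'I_k.+2.
Proof. by apply: val_inj; rewrite /= /bump; have := ltn_ord j; lia. Qed.

Lemma det_bordered_minor (T : comNzRingType) k (M : 'M[T]_k.+2) :
    (forall j, j != ord0 -> j != ord_max -> M ord_max j = 0) ->
  \det (row' ord0 (col' ord_max M)) =
    (-1) ^+ k * M ord_max ord0 *
    \det (row' ord0 (col' ord0 (row' ord_max (col' ord_max M)))).
Proof.
move=> Mmax0; rewrite (expand_det_row _ ord_max) (bigD1 ord0) //= big1 ?addr0.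
  rewrite /cofactor !mxE lift_ord0_max lift_max_ord0 addn0 mulrCA mulrA.
  by congr (_ * \det _); apply/matrixP => i j; rewrite !mxE lift0_lift_max.
move=> j j0; rewrite !mxE lift_ord0_max Mmax0 ?mul0r //.
  by rewrite -(lift_max_ord0 k) (inj_eq lift_inj).
by rewrite eq_sym neq_lift.
Qed.

Lemma det_bordered (T : comNzRingType) k (M : 'M[T]_k.+2) :
    (forall j, j != ord0 -> j != ord_max -> M ord_max j = 0) ->
    (forall i, i != ord0 -> i != ord_max -> M i ord_max = 0) ->
  let N := row' ord_max (col' ord_max M) in
  \det M = M ord_max ord_max * \det N
           - M ord_max ord0 * M ord0 ord_max * \det (row' ord0 (col' ord0 N)).
Proof.
move=> Mmax0 M0max N.
rewrite (expand_det_row _ ord_max) (bigD1 ord0) //= (bigD1 ord_max) //= big1 ?addr0;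
  last by move=> j /andP[j0 jmax]; rewrite Mmax0 ?mul0r.
have -> : cofactor M ord_max ord_max = \det N.
  by rewrite /cofactor -signr_odd addnn odd_double mul1r.
have -> : cofactor M ord_max ord0 =
    (-1) ^+ k.+1 * \det (row' ord0 (col' ord_max M^T)).
  rewrite /cofactor addn0 -det_tr; congr (_ * \det _).
  by apply/matrixP => i j; rewrite !mxE.
rewrite det_bordered_minor => [|j j0 jmax]; last by rewrite mxE M0max.
have -> : \det (row' ord0 (col' ord0 (row' ord_max (col' ord_max M^T)))) =
    \det (row' ord0 (col' ord0 N)).
  by rewrite -det_tr; congr (\det _); apply/matrixP => i j; rewrite !mxE.
rewrite mxE exprS; transitivity (M ord_max ord_max * \det N - ((-1) ^+ k) ^+ 2 *
  (M ord_max ord0 * M ord0 ord_max * \det (row' ord0 (col' ord0 N)))); first ring.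
by rewrite sqrr_sign mul1r.
Qed.

Lemma det_compmx_loopless (T : comNzRingType) n (E : rel 'I_n.+1)
    (a : 'I_n.+1 -> 'I_n.+1 -> T) :
  loopless E -> \det (compmx E set0 a (fun _ => 0)) = 0.
Proof.
move=> noloop; set A := compmx _ _ _ _.
have colsum0 : const_mx 1 *m A = 0 :> 'rV_n.+1.
  apply/matrixP => z j; rewrite !mxE (bigD1 j) //= !mxE eqxx in_set0 subr0 mul1r.
  rewrite addrC; apply/eqP; rewrite subr_eq0; apply/eqP.
  rewrite [RHS]big_mkcond [RHS](bigD1 j) //= (negbTE (noloop j)) add0r.
  by apply: eq_bigr => i ij; rewrite /A !mxE (negbTE ij) mul1r.
have : (const_mx 1 : 'rV[T]_n.+1) *m A *m \adj A = 0 by rewrite colsum0 mul0mx.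
by rewrite -mulmxA mul_mx_adj mul_mx_scalar => /matrixP /(_ 0 ord0); rewrite !mxE mulr1.
Qed.

Section LeafEdge.
Variables (k : nat) (E : rel 'I_k.+1).
Local Notation E' := (add_leaf1 E).

Lemma add_leaf1_lift x y : E' (lift ord_max x) (lift ord_max y) = E x y.
Proof. by rewrite /add_leaf1 !liftK. Qed.

Lemma add_leaf1_lift_max x : E' (lift ord_max x) ord_max = (x == ord0).
Proof. by rewrite /add_leaf1 liftK unlift_none. Qed.

Lemma add_leaf1_max_lift y : E' ord_max (lift ord_max y) = (y == ord0).
Proof. by rewrite /add_leaf1 liftK unlift_none. Qed.

Lemma add_leaf1_max_max : E' ord_max ord_max = false.
Proof. by rewrite /add_leaf1 unlift_none. Qed.

Variables (S : comNzRingType) (a' : 'I_k.+2 -> 'I_k.+2 -> S).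
Local Notation a := (fun i j : 'I_k.+1 => a' (lift ord_max i) (lift ord_max j)).
Local Notation A := (compmx E set0 a (fun _ => 0)).
Local Notation A' := (compmx E' set0 a' (fun _ => 0)).
Local Notation an1 := (a' ord_max ord0).
Local Notation a1n := (a' ord0 ord_max).
Local Notation d := (\det (row' ord0 (col' ord0 (char_poly_mx A)))).

Lemma sum_ord_lift_max (V : nmodType) (F : 'I_k.+2 -> V) :
  \sum_(l < k.+2) F l = \sum_(l < k.+1) F (lift ord_max l) + F ord_max.
Proof.
rewrite big_ord_recr /=; congr (_ + _); apply: eq_bigr => l _; congr F.
by apply: val_inj; rewrite /= /bump leqNgt ltn_ord.
Qed.

Lemma compmx_leaf_interior :
  row' ord_max (col' ord_max A') = A - an1 *: delta_mx 0 0.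
Proof.
apply/matrixP => x y; rewrite !mxE (inj_eq lift_inj) add_leaf1_lift !in_set0 !subr0.
case: eqP => [<-|xy]; last first.
  suff -> : (x == 0) && (y == 0) = false by rewrite mulr0 subr0.
  by apply/negbTE/andP => -[/eqP x0 /eqP y0]; apply: xy; rewrite x0 y0.
rewrite andbb big_mkcond sum_ord_lift_max add_leaf1_lift_max.
rewrite [in RHS]big_mkcond /=; under eq_bigr do rewrite add_leaf1_lift.
by case: eqP => [->|_]; rewrite ?mulr1 ?mulr0 ?addr0 ?subr0 // lift_max_ord0 opprD.
Qed.

Lemma compmx_leaf_max_lift y :
  A' ord_max (lift ord_max y) = if y == ord0 then an1 else 0.
Proof.
rewrite mxE (negbTE (neq_lift _ _)) add_leaf1_lift_max.
by case: eqP => // ->; rewrite lift_max_ord0.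
Qed.

Lemma compmx_leaf_lift_max x :
  A' (lift ord_max x) ord_max = if x == ord0 then a1n else 0.
Proof.
rewrite mxE eq_sym (negbTE (neq_lift _ _)) add_leaf1_max_lift.
by case: eqP => // ->; rewrite lift_max_ord0.
Qed.

Lemma compmx_leaf_max_max : A' ord_max ord_max = - a1n.
Proof.
rewrite mxE eqxx in_set0 subr0 big_mkcond sum_ord_lift_max add_leaf1_max_max addr0.
rewrite (bigD1 ord0) //= add_leaf1_max_lift eqxx lift_max_ord0 big1 ?addr0 // => i.
by rewrite add_leaf1_max_lift => /negbTE->.
Qed.

Lemma char_poly_mx_leaf_border j : j != ord0 -> j != ord_max ->
  char_poly_mx A' ord_max j = 0 /\ char_poly_mx A' j ord_max = 0.
Proof.
case: (unliftP ord_max j) => [y -> y0 _|-> _]; last by rewrite eqxx.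
have /negbTE y0' : y != ord0 by rewrite -(inj_eq (@lift_inj _ ord_max)) lift_max_ord0.
rewrite !char_poly_mxE compmx_leaf_max_lift compmx_leaf_lift_max y0'.
by rewrite [_ == ord_max]eq_sym !(negbTE (neq_lift _ _)) polyC0 subr0.
Qed.

Lemma char_poly_mx_leaf_interior : row' ord_max (col' ord_max (char_poly_mx A')) =
  char_poly_mx A + an1%:P *: delta_mx 0 0.
Proof.
rewrite row'_col'_char_poly_mx compmx_leaf_interior; apply/matrixP => i j.
rewrite !mxE; case: (_ && _); rewrite /= ?mulr1 ?mulr0 ?subr0 ?addr0 //.
by rewrite polyCB; ring.
Qed.

Lemma char_poly_add_leaf :
  char_poly A' = 'X * char_poly A + a1n%:P * char_poly A + an1%:P * ('X * d).
Proof.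
rewrite /char_poly det_bordered => [|j j0 jmax|i i0 imax]; last 2 first.
- exact: (char_poly_mx_leaf_border j0 jmax).1.
- exact: (char_poly_mx_leaf_border i0 imax).2.
rewrite char_poly_mx_leaf_interior det_add_delta00 row'_col'_add_delta00.
rewrite !char_poly_mxE compmx_leaf_max_max -(lift_max_ord0 k).
rewrite compmx_leaf_max_lift compmx_leaf_lift_max eqxx /= lift_max_ord0.
rewrite -/(char_poly A) polyCN; ring.
Qed.

Lemma det_minor_add_leaf :
  \det (row' ord0 (col' ord_max (char_poly_mx A'))) = ((-1) ^+ k.+1 * an1)%:P * d.
Proof.
rewrite det_bordered_minor => [|j j0 jmax]; last exact: (char_poly_mx_leaf_border j0 jmax).1.
rewrite char_poly_mx_leaf_interior row'_col'_add_delta00 char_poly_mxE.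
rewrite -(lift_max_ord0 k) (negbTE (neq_lift _ _)) compmx_leaf_max_lift eqxx lift_max_ord0.
by rewrite mulr0n polyCM polyC_exp polyCN polyC1 exprS; ring.
Qed.

End LeafEdge.

Lemma submxDr (F : fieldType) m1 m2 n (A B : 'M[F]_(m1, n)) (C : 'M_(m2, n)) :
  (B <= C)%MS -> ((A + B)%R <= C)%MS = (A <= C)%MS.
Proof.
move=> sBC; apply/idP/idP => sAC; last exact: addmx_sub.
by rewrite -(addrK B A); apply: addmx_sub => //; rewrite (eqmx_opp B).
Qed.

Lemma submx_col_mxl (F : fieldType) m1 m2 m3 n (A : 'M[F]_(m1, n)) (B : 'M_(m2, n))
    (C : 'M_(m3, n)) :
  (A <= B)%MS -> (A <= col_mx B C)%MS.
Proof. by move=> sAB; rewrite -addsmxE (submx_trans sAB (addsmxSl _ _)). Qed.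

Lemma submx_col_mxr (F : fieldType) m1 m2 m3 n (A : 'M[F]_(m1, n)) (B : 'M_(m2, n))
    (C : 'M_(m3, n)) :
  (A <= C)%MS -> (A <= col_mx B C)%MS.
Proof. by move=> sAC; rewrite -addsmxE (submx_trans sAC (addsmxSr _ _)). Qed.

Lemma mderivXU (R : comNzRingType) n (i j : 'I_n) :
  mderiv j ('X_i : {mpoly R[n]}) = (i == j)%:R%:MP.
Proof.
rewrite mderivX mnm1E; case: eqP => [->|_]; last by rewrite scale0r mpolyC0.
have -> : (U_(j) - U_(j))%MM = 0%MM by apply/mnmP => l; rewrite !mnmE subnn.
by rewrite scale1r mpolyX0 mpolyC1.
Qed.

Lemma mderiv_comp_mpoly (R : comNzRingType) n k (lq : n.-tuple {mpoly R[k]})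
    (p : {mpoly R[n]}) j :
  mderiv j (p \mPo lq) = \sum_(i < n) mderiv j lq`_i * (mderiv i p \mPo lq).
Proof.
pose chain p := forall j,
  mderiv j (p \mPo lq) = \sum_(i < n) mderiv j lq`_i * (mderiv i p \mPo lq).
have chainC c : chain c%:MP.
  move=> l; rewrite comp_mpolyC mderivC big1 // => i _.
  by rewrite mderivC comp_mpoly0 mulr0.
have chainD p1 p2 : chain p1 -> chain p2 -> chain (p1 + p2).
  move=> h1 h2 l; rewrite comp_mpolyD mderivD h1 h2 -big_split /=.
  by apply: eq_bigr => i _; rewrite mderivD comp_mpolyD mulrDr.
have chainM p1 p2 : chain p1 -> chain p2 -> chain (p1 * p2).
  move=> h1 h2 l; rewrite rmorphM mderivM h1 h2 mulr_suml mulr_sumr -big_split /=.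
  apply: eq_bigr => i _; rewrite mderivM comp_mpolyD !rmorphM /=.
  by rewrite mulrDr [in RHS]mulrA [in RHS]mulrCA.
have chainX l : chain 'X_l.
  move=> l'; rewrite comp_mpolyXU (bigD1 l) //= big1 ?addr0; last first.
    by move=> i /negbTE il; rewrite mderivXU [l == i]eq_sym il comp_mpolyC mpolyC0 mulr0.
  by rewrite mderivXU eqxx comp_mpolyC mulr1.
suff : chain p by [].
elim/mpolyind: p => [|c mm p _ _ hp]; first by rewrite -mpolyC0.
apply: chainD => //; rewrite -mul_mpolyC mpolyXE_id; apply: (chainM) => //.
apply: (big_ind chain) => [|p1 p2|i _]; [by rewrite -mpolyC1 | exact: (chainM) |].
elim: (mm i) => [|e ih]; first by rewrite expr0 -mpolyC1.
by rewrite exprS; apply: chainM.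
Qed.

Section Gradient.
Variables (R : fieldType) (n : nat) (x : 'I_n -> R).
Implicit Types (p q : {mpoly R[n]}).

Definition mgrad p : 'rV[R]_n := \row_j (mderiv j p).@[x].

Lemma mgradD p q : mgrad (p + q) = mgrad p + mgrad q.
Proof. by apply/rowP => j; rewrite !mxE mderivD mevalD. Qed.

Lemma mgradB p q : mgrad (p - q) = mgrad p - mgrad q.
Proof. by apply/rowP => j; rewrite !mxE mderivB mevalB. Qed.

Lemma mgradZ c p : mgrad (c *: p) = c *: mgrad p.
Proof. by apply/rowP => j; rewrite !mxE mderivZ mevalZ. Qed.

Lemma mgradM p q : mgrad (p * q) = p.@[x] *: mgrad q + q.@[x] *: mgrad p.
Proof.
by apply/rowP => j; rewrite !mxE mderivM mevalD !mevalM addrC mulrC.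
Qed.

Lemma mgradC c : mgrad c%:MP = 0.
Proof. by apply/rowP => j; rewrite !mxE mderivC meval0. Qed.

Lemma mgrad0 : mgrad 0 = 0.
Proof. by rewrite -mpolyC0 mgradC. Qed.

Lemma mgradX i : mgrad 'X_i = delta_mx 0 i.
Proof. by apply/rowP => j; rewrite !mxE mderivXU mevalC eq_sym. Qed.

Lemma mgrad_horner_const (q : {poly {mpoly R[n]}}) c :
  mgrad q.[c%:MP] = \sum_(i < size q) c ^+ i *: mgrad q`_i.
Proof.
rewrite horner_coef (big_morph _ mgradD mgrad0); apply: eq_bigr => i _.
by rewrite -rmorphXn mulrC mul_mpolyC mgradZ.
Qed.

End Gradient.

Section Rename.
Variables (R : fieldType) (m m' : nat) (f : 'I_m -> 'I_m').

Definition mrename (p : {mpoly R[m]}) : {mpoly R[m']} :=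
  p \mPo [tuple 'X_(f i) | i < m].

HB.instance Definition _ :=
  GRing.RMorphism.copy mrename (comp_mpoly [tuple 'X_(f i) | i < m]).

Lemma mrenameX i : mrename 'X_i = 'X_(f i).
Proof. by rewrite /mrename comp_mpolyXU -tnth_nth tnth_mktuple. Qed.

Lemma meval_mrename x p : (mrename p).@[x] = p.@[x \o f].
Proof.
by rewrite /mrename comp_mpoly_meval; apply: meval_eq => i; rewrite tnth_mktuple mevalXU.
Qed.

Lemma mgrad_mrename x p : mgrad x (mrename p) = mgrad (x \o f) p *m rowsub f 1%:M.
Proof.
apply/rowP => j; rewrite !mxE mderiv_comp_mpoly (big_morph _ (mevalD x) (meval0 x)).
apply: eq_bigr => i _; rewrite -tnth_nth tnth_mktuple mderivXU mevalM mevalC.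
by rewrite -/(mrename _) meval_mrename !mxE mulrC.
Qed.

End Rename.

Lemma rowsub1_mul_tr (R : nzRingType) m1 m2 n (f : 'I_m1 -> 'I_n) (g : 'I_m2 -> 'I_n) :
  rowsub f 1%:M *m (rowsub g 1%:M)^T = \matrix_(i, j) (f i == g j)%:R :> 'M[R]_(m1, m2).
Proof.
apply/matrixP => i j; rewrite !mxE (bigD1 (f i)) //= big1 ?addr0.
  by rewrite !mxE eqxx mul1r eq_sym.
by move=> l /negbTE fl; rewrite !mxE eq_sym fl mul0r.
Qed.

Lemma mxrank_col_rowsub (R : fieldType) p n m1 m2 (X : 'M[R]_(p, m1))
    (f : 'I_m1 -> 'I_n) (g : 'I_m2 -> 'I_n) :
    injective f -> injective g -> (forall i j, f i != g j) ->
  \rank (col_mx (X *m rowsub f 1%:M) (rowsub g 1%:M)) = (\rank X + m2)%N.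
Proof.
move=> f_inj g_inj fg; apply/eqP; rewrite eqn_leq; apply/andP; split.
  rewrite -addsmxE; apply: leq_trans (mxrank_adds_leqif _ _).1 _.
  by apply: leq_add; [exact: mxrankM_maxl | exact: rank_leq_row].
(* Right multiplication by Q turns the matrix into block_mx X 0 0 1%:M. *)
pose Q := row_mx (rowsub f 1%:M)^T (rowsub g (1%:M : 'M[R]_n))^T.
apply: leq_trans (mxrankM_maxl _ Q).
have sel_id h (h_inj : injective h) : rowsub h 1%:M *m (rowsub h 1%:M)^T = 1%:M :> 'M[R]_ _.
  by apply/matrixP => i j; rewrite rowsub1_mul_tr !mxE (inj_eq h_inj).
have sel0 : rowsub f 1%:M *m (rowsub g 1%:M)^T = 0 :> 'M[R]_(m1, m2).
  by apply/matrixP => i j; rewrite rowsub1_mul_tr !mxE (negbTE (fg i j)).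
have sel0' : rowsub g 1%:M *m (rowsub f 1%:M)^T = 0 :> 'M[R]_(m2, m1).
  by apply/matrixP => i j; rewrite rowsub1_mul_tr !mxE eq_sym (negbTE (fg j i)).
rewrite mul_col_row -!mulmxA !sel_id // sel0 sel0' mulmx0 mulmx1.
by rewrite rank_diag_block_mx mxrank1.
Qed.

Lemma exists_nonroot (R : numDomainType) (p : {poly R}) : p != 0 -> exists a, ~~ root p a.
Proof.
move=> p0; pose rs := [seq (i%:R : R) | i <- iota 0 (size p)].
have [/(max_poly_roots p0)|/allPn[a _ pa]] := boolP (all (root p) rs); last by exists a.
suff -> : uniq rs by rewrite size_map size_iota ltnn => /(_ isT).
by rewrite map_inj_uniq ?iota_uniq // => i j /eqP; rewrite eqr_nat => /eqP.
Qed.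

Section Jacobian.
Variables (R : realFieldType) (n : nat).
Implicit Types (cs : seq {mpoly R[n]}) (x : 'I_n -> R).

Lemma row_jacobian cs x i : row i (jacobian cs x) = mgrad x cs`_i.
Proof. by apply/rowP => j; rewrite !mxE. Qed.

Lemma jacobian_eq cs x y : x =1 y -> jacobian cs x = jacobian cs y.
Proof. by move=> xy; apply/matrixP => i j; rewrite !mxE (meval_eq _ xy). Qed.

Lemma jacobian_sub cs x p (B : 'M_(p, n)) :
  {in cs, forall q, mgrad x q <= B}%MS -> (jacobian cs x <= B)%MS.
Proof. by move=> sB; apply/row_subP => i; rewrite row_jacobian sB ?mem_nth. Qed.

Lemma mgrad_sub_jacobian cs x q : q \in cs -> (mgrad x q <= jacobian cs x)%MS.
Proof.
by case/(nthP 0) => i lt <-; rewrite -(row_jacobian x (Ordinal lt)) row_sub.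
Qed.

End Jacobian.

Section IOCoefficients.
Variables (R : realFieldType) (k : nat) (E : rel 'I_k) (L : {set 'I_k}).
Local Notation G := (@gen_compmx R _ E L).
Local Notation IO := (@io_coeffs R _ E L).
Local Notation J In Out x := (jacobian (@io_coef_map R _ E L In Out) x).

Lemma jacobian_io_sub In Out x p (B : 'M_(p, _)) :
    {in IO In Out, forall q, mgrad x q <= B}%MS ->
  (J In Out x <= B)%MS.
Proof. by move=> sB; apply: jacobian_sub => q; rewrite mem_filter => /andP[_ /sB]. Qed.

Lemma mgrad_io_sub_jacobian In Out x q :
  q \in IO In Out -> (mgrad x q <= J In Out x)%MS.
Proof.
move=> q_io; have [q_nc|/negPn/eqP->] := boolP (nonconst q).
  by apply: mgrad_sub_jacobian; rewrite mem_filter q_nc.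
by rewrite mgradC sub0mx.
Qed.

Variables (i j : 'I_k).
Local Notation D := ((-1) ^+ (i + j)%N * \det (row' j (col' i (char_poly_mx G)))).

Lemma io_coeffs_set1 :
  IO [set j] [set i] = polyseq (char_poly G) ++ polyseq D.
Proof. by rewrite /io_coeffs !enum_set1 /= !cats0. Qed.

Lemma jacobian_io_set1_sub x p (B : 'M_(p, _)) :
    (forall t, mgrad x (char_poly G)`_t <= B)%MS -> (forall t, mgrad x D`_t <= B)%MS ->
  (J [set j] [set i] x <= B)%MS.
Proof.
move=> sc sD; apply: jacobian_io_sub => q.
by rewrite io_coeffs_set1 mem_cat => /orP[] /(nthP 0)[t _ <-].
Qed.

Lemma mgrad_char_poly_coef_sub_jacobian x t :
  (mgrad x (char_poly G)`_t <= J [set j] [set i] x)%MS.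
Proof.
have [lt|ge] := ltnP t (size (char_poly G)); last by rewrite nth_default ?mgrad0 ?sub0mx.
by apply: mgrad_io_sub_jacobian; rewrite io_coeffs_set1 mem_cat mem_nth.
Qed.

Lemma mgrad_io_minor_coef_sub_jacobian x t : (mgrad x D`_t <= J [set j] [set i] x)%MS.
Proof.
have [lt|ge] := ltnP t (size D); last by rewrite nth_default ?mgrad0 ?sub0mx.
by apply: mgrad_io_sub_jacobian; rewrite io_coeffs_set1 mem_cat mem_nth ?orbT.
Qed.

End IOCoefficients.

Lemma gen_compmx_noleak (R : realFieldType) k (E : rel 'I_k) :
  @gen_compmx R _ E set0 = compmx E set0 (@gen_a R _ E set0) (fun _ => 0).
Proof. by apply/matrixP => i j; rewrite !mxE in_set0. Qed.

Section LeafParameters.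
Variables (k : nat) (E : rel 'I_k.+1).
Local Notation E' := (add_leaf1 E).
Local Notation m := (nparams E set0).
Local Notation m' := (nparams E' set0).

Definition lift_edge (e : {p : 'I_k.+1 * 'I_k.+1 | E p.2 p.1}) :
    {p : 'I_k.+2 * 'I_k.+2 | E' p.2 p.1} :=
  exist (fun p => E' p.2 p.1) (lift ord_max (val e).1, lift ord_max (val e).2)
    (etrans (add_leaf1_lift _ _ _) (valP e)).

Lemma no_leak (q : {i : 'I_k.+1 | i \in set0}) : False.
Proof. by case: q => i; rewrite in_set0. Qed.

Definition lift_param (t : param_t E set0) : param_t E' set0 :=
  match t with inl e => inl (lift_edge e) | inr q => False_rect _ (no_leak q) end.

Definition lift_index (i : 'I_m) : 'I_m' := enum_rank (lift_param (enum_val i)).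

Definition edge_index (i j : 'I_k.+2) (ji : E' j i) : 'I_m' :=
  enum_rank (inl (exist (fun p => E' p.2 p.1) (i, j) ji) : param_t E' set0).

Lemma add_leaf1_max_0 : E' ord_max ord0.
Proof. by rewrite -(lift_max_ord0 k) add_leaf1_max_lift. Qed.

Lemma add_leaf1_0_max : E' ord0 ord_max.
Proof. by rewrite -(lift_max_ord0 k) add_leaf1_lift_max. Qed.

Definition a1n_index := edge_index add_leaf1_max_0.
Definition an1_index := edge_index add_leaf1_0_max.
Definition leaf_index (s : 'I_2) := if s == ord0 then a1n_index else an1_index.

Lemma lift_param_inj : injective lift_param.
Proof.
case=> [[[x1 y1] e1]|q]; last by case: (no_leak q).
case=> [[[x2 y2] e2]|q]; last by case: (no_leak q).
case=> /(can_inj (bumpK _)) /val_inj x12 /(can_inj (bumpK _)) /val_inj y12.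
by congr inl; apply: val_inj; rewrite /= x12 y12.
Qed.

Lemma lift_index_inj : injective lift_index.
Proof. by move=> i j /enum_rank_inj /lift_param_inj /enum_val_inj. Qed.

Lemma lift_index_neq_a1n i : lift_index i != a1n_index.
Proof.
apply/eqP => /enum_rank_inj; rewrite /lift_param.
case: (enum_val i) => [e|q]; last by case: (no_leak q).
by case=> _; rewrite /bump; have := ltn_ord (val e).2; lia.
Qed.

Lemma lift_index_neq_an1 i : lift_index i != an1_index.
Proof.
apply/eqP => /enum_rank_inj; rewrite /lift_param.
case: (enum_val i) => [e|q]; last by case: (no_leak q).
by case=> + _; rewrite /bump; have := ltn_ord (val e).1; lia.
Qed.

Lemma leaf_index_inj : injective leaf_index.
Proof.
have a1n_an1 : a1n_index != an1_index by apply/eqP => /enum_rank_inj [].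
move=> [[|[|//]] i1] [[|[|//]] i2]; rewrite /leaf_index /= => h; apply: val_inj => //.
  by move: a1n_an1; rewrite h eqxx.
by move: a1n_an1; rewrite h eqxx.
Qed.

Lemma lift_index_neq_leaf i s : lift_index i != leaf_index s.
Proof.
by rewrite /leaf_index; case: ifP => _; rewrite ?lift_index_neq_a1n ?lift_index_neq_an1.
Qed.

End LeafParameters.

Section LeafModel.
Variables (R : realFieldType) (k : nat) (E : rel 'I_k.+1).
Local Notation E' := (add_leaf1 E).
Local Notation m := (nparams E set0).
Local Notation m' := (nparams E' set0).
Local Notation lft := (@lift_index k E).
Local Notation a1n := (@a1n_index k E).
Local Notation an1 := (@an1_index k E).
Local Notation ren := (@mrename R _ _ lft).
Local Notation G := (@gen_compmx R _ E set0).
Local Notation G' := (@gen_compmx R _ E' set0).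
Local Notation ga' := (@gen_a R _ E' set0).
Local Notation c := (char_poly G).
Local Notation d := (\det (row' ord0 (col' ord0 (char_poly_mx G)))).

Lemma gen_a_lift i j : ga' (lift ord_max i) (lift ord_max j) = ren (@gen_a R _ E set0 i j).
Proof.
rewrite /gen_a; case: insubP => [e Ee ve|nE]; last first.
  by move: nE; rewrite /= add_leaf1_lift => nE; rewrite insubN //= rmorph0.
have Eji : E (i, j).2 (i, j).1 by move: Ee; rewrite /= add_leaf1_lift.
rewrite (insubT (fun p : 'I_k.+1 * 'I_k.+1 => E p.2 p.1) Eji) /= mrenameX.
rewrite /lift_index enum_rankK /=; congr 'X_(enum_rank (inl _)).
by apply: val_inj; rewrite /= ve.
Qed.

Lemma gen_a_a1n : ga' ord0 ord_max = 'X_a1n.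
Proof.
rewrite /gen_a insubT /= => [|h]; first exact: add_leaf1_max_0.
by congr 'X_(enum_rank (inl _)); apply: val_inj.
Qed.

Lemma gen_a_an1 : ga' ord_max ord0 = 'X_an1.
Proof.
rewrite /gen_a insubT /= => [|h]; first exact: add_leaf1_0_max.
by congr 'X_(enum_rank (inl _)); apply: val_inj.
Qed.


Lemma map_gen_compmx_lift :
  map_mx ren G = compmx E set0 (fun i j => ga' (lift ord_max i) (lift ord_max j)) (fun _ => 0).
Proof.
apply/matrixP => i j; rewrite !mxE !in_set0 !subr0.
case: eqP => _; last by case: (E j i); rewrite ?gen_a_lift ?rmorph0.
by rewrite rmorphN rmorph_sum; congr (- _); apply: eq_bigr => l _; rewrite gen_a_lift.
Qed.

Lemma char_poly_gen_leaf : char_poly G' =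
  'X * map_poly ren c + ('X_a1n)%:P * map_poly ren c + ('X_an1)%:P * ('X * map_poly ren d).
Proof.
rewrite gen_compmx_noleak char_poly_add_leaf -map_gen_compmx_lift map_char_poly.
by rewrite -map_char_poly_mx -map_col' -map_row' det_map_mx gen_a_a1n gen_a_an1.
Qed.

Lemma minor_gen_leaf :
  (-1) ^+ (@ord_max k.+1 + @ord0 k.+1)%N * \det (row' ord0 (col' ord_max (char_poly_mx G'))) =
  ('X_an1)%:P * map_poly ren d.
Proof.
rewrite gen_compmx_noleak det_minor_add_leaf -map_gen_compmx_lift gen_a_an1.
rewrite -map_char_poly_mx -map_col' -map_row' det_map_mx addn0 polyCM polyC_exp.
by rewrite polyCN polyC1 !mulrA -exprD /= addnn -signr_odd odd_double mul1r.
Qed.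

Lemma minor_gen_coef_lead : d`_k = 1.
Proof.
rewrite row'_col'_char_poly_mx; have /monicP := char_poly_monic (row' ord0 (col' ord0 G)).
by rewrite lead_coefE size_char_poly.
Qed.

End LeafModel.

Section LeafJacobian.
Variables (R : realFieldType) (k : nat) (E : rel 'I_k.+1).
Local Notation E' := (add_leaf1 E).
Local Notation m := (nparams E set0).
Local Notation m' := (nparams E' set0).
Local Notation lft := (@lift_index k E).
Local Notation a1n := (@a1n_index k E).
Local Notation an1 := (@an1_index k E).
Local Notation leaf := (@leaf_index k E).
Local Notation ren := (@mrename R _ _ lft).
Local Notation G := (@gen_compmx R _ E set0).
Local Notation c := (char_poly G).
Local Notation d := (\det (row' ord0 (col' ord0 (char_poly_mx G)))).
Local Notation J x := (jacobian (@io_coef_map R _ E set0 [set ord0] [set ord0]) x).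
Local Notation J' x := (jacobian (@io_coef_map R _ E' set0 [set ord0] [set ord_max]) x).

Definition leaf_bound_mx (x : 'I_m' -> R) :=
  col_mx (J (x \o lft) *m rowsub lft 1%:M) (rowsub leaf 1%:M).

Lemma rank_leaf_bound_mx x : \rank (leaf_bound_mx x) = (\rank (J (x \o lft)) + 2)%N.
Proof.
exact: mxrank_col_rowsub (@lift_index_inj k E) (@leaf_index_inj k E)
  (@lift_index_neq_leaf k E).
Qed.

Lemma minor_coef_sub_jacobian y t : (mgrad y d`_t <= J y)%MS.
Proof.
by have := @mgrad_io_minor_coef_sub_jacobian R _ E set0 ord0 ord0 y t; rewrite expr0 mul1r.
Qed.

Lemma delta_leaf_sub_bound x s : ((delta_mx 0 (leaf s) : 'rV_m') <= leaf_bound_mx x)%MS.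
Proof. by apply: submx_col_mxr; rewrite -row1 -row_rowsub row_sub. Qed.

Lemma mgrad_mrename_sub_bound x q :
  (mgrad (x \o lft) q <= J (x \o lft))%MS -> (mgrad x (ren q) <= leaf_bound_mx x)%MS.
Proof. by move=> sq; rewrite mgrad_mrename; apply/submx_col_mxl/submxMr. Qed.

Lemma jacobian_leaf_sub_bound x : (J' x <= leaf_bound_mx x)%MS.
Proof.
have su := delta_leaf_sub_bound x ord0; have sv := delta_leaf_sub_bound x 1.
apply: jacobian_io_set1_sub => t.
  rewrite char_poly_gen_leaf !(coefD, coefXM, coefCM, coef_map) /=.
  rewrite !mgradD !mgradM !mgradX; apply: addmx_sub; [apply: addmx_sub|].
  - case: t => [|t] /=; rewrite ?mgrad0 ?sub0mx //.
    exact/mgrad_mrename_sub_bound/mgrad_char_poly_coef_sub_jacobian.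
  - apply: addmx_sub; apply: scalemx_sub => //.
    exact/mgrad_mrename_sub_bound/mgrad_char_poly_coef_sub_jacobian.
  apply: addmx_sub; apply: scalemx_sub => //.
  case: t => [|t] /=; rewrite ?mgrad0 ?sub0mx //.
  exact/mgrad_mrename_sub_bound/minor_coef_sub_jacobian.
rewrite minor_gen_leaf coefCM coef_map /= mgradM mgradX.
apply: addmx_sub; apply: scalemx_sub => //.
exact/mgrad_mrename_sub_bound/minor_coef_sub_jacobian.
Qed.

Section LowerBound.
Variable x : 'I_m' -> R.
Hypothesis x_an1 : x an1 = 1.
Hypothesis nonroot_x_a1n : ~~ root (char_poly (map_mx (meval (x \o lft)) G)) (- x a1n).

Lemma mgrad_an1_minor_coef_sub t : (mgrad x ('X_an1 * ren d`_t) <= J' x)%MS.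
Proof.
have := @mgrad_io_minor_coef_sub_jacobian R _ E' set0 ord_max ord0 x t.
by rewrite minor_gen_leaf coefCM coef_map.
Qed.

Lemma delta_an1_sub_jacobian : ((delta_mx 0 an1 : 'rV_m') <= J' x)%MS.
Proof.
by have := mgrad_an1_minor_coef_sub k; rewrite minor_gen_coef_lead rmorph1 mulr1 mgradX.
Qed.

Lemma mgrad_minor_coef_sub t : (mgrad x (ren d`_t) <= J' x)%MS.
Proof.
have := mgrad_an1_minor_coef_sub t; rewrite mgradM mgradX mevalXU x_an1 scale1r submxDr //.
exact: scalemx_sub delta_an1_sub_jacobian.
Qed.

Local Notation c' := (('X + ('X_a1n)%:P) * map_poly ren c).

Lemma mgrad_shifted_char_coef_sub t : (mgrad x c'`_t <= J' x)%MS.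
Proof.
have -> : c' = char_poly (@gen_compmx R _ E' set0) - ('X_an1)%:P * ('X * map_poly ren d).
  by rewrite char_poly_gen_leaf; ring.
rewrite coefB mgradB addmx_sub ?mgrad_char_poly_coef_sub_jacobian // (eqmx_opp _).
rewrite coefCM coefXM; case: t => [|t] /=; first by rewrite mulr0 mgrad0 sub0mx.
by rewrite coef_map mgrad_an1_minor_coef_sub.
Qed.

Lemma delta_a1n_sub_jacobian : ((delta_mx 0 a1n : 'rV_m') <= J' x)%MS.
Proof.
(* Evaluating c' at 'X = - x a1n kills its first factor, leaving c(- x a1n) times the
   unit vector of a1n. *)
have : (mgrad x c'.[(- x a1n)%:MP] <= J' x)%MS.
  rewrite mgrad_horner_const; apply: summx_sub => i _.
  exact/scalemx_sub/mgrad_shifted_char_coef_sub.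
set w := (map_poly ren c).[(- x a1n)%:MP].@[x].
have -> : mgrad x c'.[(- x a1n)%:MP] = w *: delta_mx 0 a1n.
  rewrite hornerM hornerD hornerX hornerC mgradM mgradD mgradC mgradX add0r.
  by rewrite mevalD mevalC mevalXU addNr scale0r add0r.
have w0 : w != 0.
  have renC : ren (- x a1n)%:MP = (- x a1n)%:MP by exact: comp_mpolyC.
  move: nonroot_x_a1n; rewrite /root -map_char_poly -[- x a1n](mevalC (x \o lft)) horner_map.
  by rewrite /w -renC horner_map meval_mrename.
by move=> sw; rewrite -[delta_mx _ _](scalerK w0) scalemx_sub.
Qed.

Lemma mgrad_char_coef_sub t : (mgrad x (ren c`_t) <= J' x)%MS.
Proof.
(* Coefficient t + 1 of c' is c_t + 'X_a1n c_(t + 1); descend from the degree of c. *)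
have step t' : (mgrad x (ren c`_t'.+1) <= J' x)%MS -> (mgrad x (ren c`_t') <= J' x)%MS.
  move=> s1; have := mgrad_shifted_char_coef_sub t'.+1.
  rewrite mulrDl coefD coefXM coefCM /= !coef_map mgradD mgradM mgradX mevalXU.
  by rewrite submxDr // addmx_sub ?scalemx_sub ?delta_a1n_sub_jacobian.
suff sub_from s t' : (size c <= t' + s)%N -> (mgrad x (ren c`_t') <= J' x)%MS.
  exact: (sub_from (size c)) (leq_addl _ _).
elim: s t' => [|s IHs] t' le_c; last by apply/step/IHs; rewrite addSnnS.
by rewrite addn0 in le_c; rewrite nth_default // rmorph0 mgrad0 sub0mx.
Qed.

Lemma leaf_bound_mx_sub_jacobian : (leaf_bound_mx x <= J' x)%MS.
Proof.
rewrite col_mx_sub; apply/andP; split; apply/row_subP => i; last first.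
  rewrite row_rowsub row1 /leaf_index.
  by case: ifP => _; [exact: delta_a1n_sub_jacobian | exact: delta_an1_sub_jacobian].
rewrite row_mul row_jacobian -mgrad_mrename.
have := mem_nth 0 (ltn_ord i); rewrite mem_filter => /andP[_].
rewrite io_coeffs_set1 mem_cat => /orP[] /(nthP 0)[t _ <-]; first exact: mgrad_char_coef_sub.
by rewrite /= expr0 mul1r; exact: mgrad_minor_coef_sub.
Qed.

End LowerBound.

End LeafJacobian.

Lemma generic_jacobian_rank_add_leaf (R : realFieldType) k (E : rel 'I_k.+1) r :
    generic_jacobian_rank (@io_coef_map R _ E set0 [set ord0] [set ord0]) r ->
  generic_jacobian_rank
    (@io_coef_map R _ (add_leaf1 E) set0 [set ord0] [set ord_max]) r.+2.
Proof.
move=> [[x0 rank_x0] rank_le]; split=> [|x]; last first.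
  apply: leq_trans (mxrankS (jacobian_leaf_sub_bound x)) _.
  by rewrite rank_leaf_bound_mx addn2 !ltnS.
pose lft := @lift_index k E; pose G := @gen_compmx R _ E set0.
have [a nonroot_a] := exists_nonroot (monic_neq0 (char_poly_monic (map_mx (meval x0) G))).
pose x t := if t == a1n_index E then - a else if t == an1_index E then 1
            else oapp x0 0 [pick i | lft i == t].
have x_lft : x \o lft =1 x0.
  move=> i; rewrite /x /= (negbTE (lift_index_neq_a1n i)) (negbTE (lift_index_neq_an1 i)).
  by case: pickP => [j /eqP/lift_index_inj -> //|/(_ i)]; rewrite eqxx.
have x_a1n : x (a1n_index E) = - a by rewrite /x eqxx.
have x_an1 : x (an1_index E) = 1.
  by rewrite /x eqxx; case: eqP => // /enum_rank_inj [].
have nonroot_x : ~~ root (char_poly (map_mx (meval (x \o lft)) G)) (- x (a1n_index E)).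
  by rewrite x_a1n opprK (eq_map_mx _ (fun p => meval_eq p x_lft)).
have rank_bound : \rank (leaf_bound_mx x) = r.+2.
  by rewrite rank_leaf_bound_mx (jacobian_eq _ x_lft) rank_x0 addn2.
exists x; apply/eqP; rewrite eqn_leq -rank_bound.
by rewrite !mxrankS ?jacobian_leaf_sub_bound ?leaf_bound_mx_sub_jacobian.
Qed.

(* M' has n = k.+2 compartments, so n >= 3 is hk. *)
Theorem proposition4p14 (R : realFieldType) (k : nat) (hk : (1 <= k)%N)
    (E : rel 'I_k.+1) (hloop : loopless E) (hsc : strongly_connected E) :
  (forall (S : comNzRingType) (a' : 'I_k.+2 -> 'I_k.+2 -> S),
    let a := fun i j : 'I_k.+1 => a' (lift ord_max i) (lift ord_max j) in
    let A := compmx E set0 a (fun _ => 0) in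
    let A' := compmx (add_leaf1 E) set0 a' (fun _ => 0) in
    let c := char_poly A in
    let d := \det (row' ord0 (col' ord0 (char_poly_mx A))) in
    let cs := char_poly A' in
    let ds := \det (row' ord0 (col' ord_max (char_poly_mx A'))) in
    let an1 := a' ord_max ord0 in
    let a1n := a' ord0 ord_max in
    (forall i : nat, (i <= k)%N -> ds`_i = (-1) ^+ k.+1 * an1 * d`_i) /\
    (forall i : nat, (1 <= i <= k.+1)%N ->
        cs`_i = c`_i.-1 + a1n * c`_i + an1 * d`_i.-1) /\
    (cs`_0 = 0 /\ c`_0 = 0)) /\
  (forall r : nat,
    generic_jacobian_rank (@io_coef_map R _ E set0 [set ord0] [set ord0]) r ->
    generic_jacobian_rank
      (@io_coef_map R _ (add_leaf1 E) set0 [set ord0] [set ord_max]) r.+2).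
Proof.
split=> [S a' a A A' c d cs ds an1 a1n | r]; last exact: generic_jacobian_rank_add_leaf.
have c0 : c`_0 = 0 by rewrite char_poly_det det_compmx_loopless ?mulr0.
split; first by move=> i _; rewrite /ds det_minor_add_leaf coefCM.
rewrite /cs char_poly_add_leaf -/c -/d.
split=> [[|i] // _|]; rewrite !coefD !coefCM !coefXM //=.
by rewrite c0 !mulr0 !addr0.
Qed.
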